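(* Let $r_1,\dots,r_n\in\mathbb R$ and $r=\mathrm{diag}(r_1,\dots,r_n)$. For each $1\le i,k\le n$, $q_{i,k}$ interlaces $\sigma_k(r+tI)$: if $u_1\ge u_2\ge\cdots\ge u_k$ are the roots of $\sigma_k(r+tI)$ and $v_1\ge\cdots\ge v_{k-1}$ are the roots of $q_{i,k}$, then $u_k\le v_{k-1}\le u_{k-1}\le\cdots\le v_1\le u_1$.
   Context: $\sigma_k(r+tI)=\sum_{i_1<\cdots<i_k}(t+r_{i_1})\cdots(t+r_{i_k})$, and $q_{i,k}(t)=\sum_{j=0}^{k-1}(-1)^j\sigma_{k-1-j}(r+tI)(t+r_i)^j$ with $\sigma_0=1$; both are real-rooted. *)

From HB Require Import structures.
From mathcomp Require Import all_boot all_order all_algebra.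
Set Implicit Arguments. Unset Strict Implicit. Unset Printing Implicit Defensive.
Import Order.TTheory GRing.Theory Num.Theory.
Local Open Scope ring_scope.

(* sigma_k(r + tI) = sum over k-subsets S of prod_{j in S} (t + r_j), as a
   polynomial in t.  sigma_0 = 1 (empty product over the empty set). *)
Definition sigma_poly (R : nzRingType) (n : nat) (r : 'I_n -> R) (k : nat)
  : {poly R} :=
  \sum_(S : {set 'I_n} | #|S| == k) \prod_(j in S) ('X + (r j)%:P).

Definition q_poly (R : nzRingType) (n : nat) (r : 'I_n -> R) (i : 'I_n) (k : nat)
  : {poly R} :=
  \sum_(j < k) ((-1) ^+ j *: sigma_poly r (k.-1 - j) * ('X + (r i)%:P) ^+ j).

Definition is_root_list (R : nzRingType) (p : {poly R}) (s : seq R) : Prop :=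
  p = lead_coef p *: \prod_(x <- s) ('X - x%:P).

Definition nonincr (R : numDomainType) (s : seq R) : bool :=
  sorted (fun a b => b <= a) s.

(* Let s_m be sigma_m of the n-1 shifted variables t + r_j, j <> i.  Then
   q_{i,k+1} = s_k,  sigma_{k+1} = s_{k+1} + (t + r_i) s_k  and
   s_{k+1}' = (n-1-k) s_k.  Every s_m is real-rooted: descend from
   s_{n-1} = prod_j (t + r_j), using that the derivative of a real-rooted
   polynomial is real-rooted (sign changes + intermediate value theorem).
   So for k+1 < n, with p = s_{k+1}, sigma_{k+1} is a multiple of
   p + c (t + r_i) p' for c = 1/(n-1-k) > 0, and the key lemma
   [deriv_shift_interl] shows that the roots of this polynomial and of p'
   interlace: they share the repeated roots of p, and the remaining roots
   interlace strictly, again by locating sign changes.  For k+1 = n,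
   sigma_n = (t + r_i) q_{i,n} directly.

   Interlacing is expressed by counting functions: root lists U and V
   interlace when, for every c, the numbers of roots above c differ by 0 or
   1 ([count_interlacing]).  This form is invariant under permutation and
   common factors, and for sorted lists it is the entrywise inequality of
   the theorem. *)

From HB Require Import structures.
From mathcomp Require Import all_boot all_order all_algebra.
From mathcomp Require Import polyrcf.
From mathcomp Require Import ring lra.
Import Order.TTheory GRing.Theory Num.Theory.
Set Implicit Arguments. Unset Strict Implicit. Unset Printing Implicit Defensive.
Local Open Scope ring_scope.

Section CountingFunctions.
Variable R : realDomainType.
Implicit Types (c t : R) (s x y z w : seq R).

Definition nabove c s : nat := count (fun l => c < l) s.

Fixpoint interl x y : bool :=
  match x, y with
  | [:: _], [::] => true
  | x0 :: ((x1 :: _) as xs), y0 :: ys => [&& x1 < y0, y0 < x0 & interl xs ys]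
  | _, _ => false
  end.

Definition count_interlacing x y : Prop :=
  forall c, (nabove c y <= nabove c x <= (nabove c y).+1)%N.

Lemma gt_trans : transitive (>%R : rel R).
Proof. by move=> b a c ba cb; exact: lt_trans cb ba. Qed.

Lemma sorted_gt_head a s : sorted >%R (a :: s) -> all (fun l => l < a) s.
Proof. by move=> /(order_path_min gt_trans). Qed.

Lemma sorted_le_head a s : sorted >%R (a :: s) -> all (fun l => l <= a) (a :: s).
Proof.
by move=> /sorted_gt_head /allP sa; rewrite /= lexx; apply/allP => l /sa /ltW.
Qed.

Lemma nabove_cons c a s : nabove c (a :: s) = ((c < a)%R + nabove c s)%N.
Proof. by []. Qed.

Lemma nabove_eq0 c s : all (fun l => l <= c) s -> nabove c s = 0%N.
Proof.
by move=> /allP sc; apply/eqP; rewrite -leqn0 leqNgt -has_count;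
   apply/hasPn => l /sc; rewrite -leNgt.
Qed.

Lemma nabove_size c s : all (fun l => c < l) s -> nabove c s = size s.
Proof. by move=> cs; apply/eqP; rewrite -all_count. Qed.

Lemma interl_cons2 a a' b x y :
  interl [:: a, a' & x] (b :: y) = [&& a' < b, b < a & interl (a' :: x) y].
Proof. by []. Qed.

Lemma interl_sorted x y : interl x y -> sorted >%R x /\ sorted >%R y.
Proof.
elim: y x => [|b y IH] [|a [|a' x]] //; rewrite interl_cons2 => /and3P[a'b ba hxy].
have [sx sy] := IH _ hxy; split; first by rewrite /= (lt_trans a'b ba).
case: y hxy sy {IH} => [|b' y] //.
by case: x {sx} => [|a'' x] //; rewrite interl_cons2 /= => /and3P[_ b'a' _] ->;
   rewrite (lt_trans b'a' a'b).
Qed.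

Lemma interl_size x y : interl x y -> size x = (size y).+1.
Proof.
elim: y x => [|b y IH] [|a [|a' x]] //; rewrite interl_cons2.
by move=> /and3P[_ _ /IH] /= [->].
Qed.

Lemma interl_below_head a x y : interl (a :: x) y -> all (fun l => l < a) y.
Proof.
case: y x => [|b y] [|a' x] // hxy; have [_ sy] := interl_sorted hxy.
move: hxy; rewrite interl_cons2 /= => /and3P[_ ba _]; rewrite ba /=.
by apply/allP => l /(allP (sorted_gt_head sy)) /lt_trans; apply.
Qed.

Lemma interl_notin x y t : interl x y -> t \in y -> t \notin x.
Proof.
elim: y x => [|b y IH] [|a [|a' x]] // hxy.
have [sx _] := interl_sorted hxy; have ha' := allP (sorted_le_head (path_sorted sx)).
move: hxy; rewrite interl_cons2 => /and3P[a'b ba hxy].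
rewrite in_cons => /orP[/eqP ->|ty].
  rewrite in_cons negb_or eq_sym (gt_eqF ba) /=; apply/negP => /ha'.
  by rewrite leNgt a'b.
rewrite in_cons negb_or (IH _ hxy ty) andbT eq_sym gt_eqF //.
by rewrite (lt_trans _ (lt_trans a'b ba)) // (allP (interl_below_head hxy)).
Qed.

Lemma nabove_nth z j : sorted >%R z -> (j < size z)%N -> nabove z`_j z = j.
Proof.
elim: z j => [|a z IH] [|j] // sz jz.
  rewrite nabove_cons ltxx nabove_eq0 //.
  by have /andP[] := sorted_le_head sz.
rewrite nabove_cons /= (allP (sorted_gt_head sz)) ?mem_nth //.
by rewrite IH //; exact: path_sorted sz.
Qed.

Lemma interl_nabove_nth x y j : interl x y -> (j < size y)%N ->
  nabove y`_j x = j.+1.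
Proof.
elim: y x j => [|b y IH] [|a [|a' x]] [|j] // hxy jy; have [sx sy] := interl_sorted hxy;
  move: hxy; rewrite interl_cons2 => /and3P[a'b ba hxy].
  rewrite nabove_cons ba nabove_eq0 //.
  by apply/allP => l /(allP (sorted_le_head (path_sorted sx))) /le_trans; apply; exact: ltW.
rewrite nabove_cons (IH _ j hxy jy).
by rewrite /= (lt_trans _ ba) // (allP (sorted_gt_head sy)) // mem_nth.
Qed.

Lemma interl_count_interlacing x y : interl x y -> count_interlacing x y.
Proof.
move=> + c; elim: y x => [|b y IH] [|a [|a' x]] //.
  by rewrite nabove_cons; case: (c < a).
move=> hxy; have [sx sy] := interl_sorted hxy.
move: hxy; rewrite interl_cons2 => /and3P[a'b ba hxy].
have /andP[lo hi] := IH _ hxy.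
rewrite (nabove_cons c a) (nabove_cons c b).
have [cb|bc] := ltP c b; first by rewrite (lt_trans cb ba) !add1n ltnS lo.
rewrite (@nabove_eq0 _ (a' :: x)) ?(@nabove_eq0 _ y) ?add0n ?addn0; first by case: (c < a).
  by apply/allP => l /(allP (sorted_gt_head sy)) /ltW /le_trans; apply.
by apply/allP => l /(allP (sorted_le_head (path_sorted sx))) /le_trans; apply;
   exact: ltW (lt_le_trans a'b bc).
Qed.

Lemma interl_strip a x e y : interl (a :: x ++ [:: e]) y -> interl y x.
Proof.
elim: x a y => [|b x IH] a [|y0 [|y1 y]] //.
- by rewrite cat0s interl_cons2 => /and3P[].
- by rewrite cat_cons interl_cons2; case: x {IH} => [|? ?] /and3P[].
rewrite cat_cons interl_cons2 => /and3P[by0 _ hxy].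
rewrite interl_cons2 by0 (IH _ _ hxy) andbT.
by case: x hxy {IH} => [|b' x]; rewrite ?cat0s ?cat_cons interl_cons2 => /and3P[_ -> _].
Qed.

Lemma count_interlacing_cons a s : count_interlacing (a :: s) s.
Proof. by move=> c; rewrite nabove_cons; case: (c < a); rewrite ?leqnSn ?leqnn. Qed.

Lemma count_interlacing_catl s x y :
  count_interlacing x y -> count_interlacing (s ++ x) (s ++ y).
Proof. by move=> hxy c; rewrite /nabove !count_cat -addnS !leq_add2l; exact: hxy. Qed.

Lemma nabove_gt_nonincr s j c : nonincr s -> (j < size s)%N -> c < s`_j ->
  (j < nabove c s)%N.
Proof.
elim: s j => [|a s IH] [|j] // ss js cs; rewrite nabove_cons.
  by rewrite cs.
have sa : s`_j <= a by apply: (allP (order_path_min ge_trans ss)); rewrite mem_nth.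
rewrite (lt_le_trans cs sa) add1n ltnS.
by apply: IH => //; exact: path_sorted ss.
Qed.

Lemma nabove_le_nonincr s j c : nonincr s -> (j < size s)%N -> s`_j <= c ->
  (nabove c s <= j)%N.
Proof.
elim: s j => [|a s IH] [|j] // ss js sc; rewrite nabove_cons.
  rewrite ltNge sc add0n leqn0; apply/eqP/nabove_eq0.
  by apply/allP => l /(allP (order_path_min ge_trans ss)) /le_trans; apply.
have {}IH : (nabove c s <= j)%N by apply: IH => //; exact: path_sorted ss.
by case: (c < a); rewrite ?add1n ?add0n ?ltnS // (leq_trans IH).
Qed.

Lemma count_interlacing_nth u v k : size u = k -> size v = k.-1 ->
  nonincr u -> nonincr v -> count_interlacing u v ->
  forall j, (j < k.-1)%N -> u`_j.+1 <= v`_j /\ v`_j <= u`_j.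
Proof.
move=> su sv ou ov huv j jk.
have jv : (j < size v)%N by rewrite sv.
have ju : (j.+1 < size u)%N by rewrite su; case: (k) jk.
have /andP[lo hi] := huv v`_j; have /andP[lo' _] := huv u`_j.
split; rewrite leNgt; apply/negP => h.
  have := leq_trans (nabove_gt_nonincr ou ju h) hi; rewrite ltnS => h'.
  by have := leq_trans h' (nabove_le_nonincr ov jv (lexx _)); rewrite ltnn.
have ju' : (j < size u)%N by exact: ltnW.
have := leq_trans (leq_trans (nabove_gt_nonincr ov jv h) lo')
  (nabove_le_nonincr ou ju' (lexx _)).
by rewrite ltnn.
Qed.

End CountingFunctions.

Definition rootsp (R : nzRingType) (s : seq R) : {poly R} :=
  \prod_(a <- s) ('X - a%:P).

Section RootPoly.
Variable R : idomainType.
Implicit Types (a : R) (s z D : seq R).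

Lemma rootsp_cons a s : rootsp (a :: s) = ('X - a%:P) * rootsp s.
Proof. by rewrite /rootsp big_cons. Qed.

Lemma rootsp_cat s z : rootsp (s ++ z) = rootsp s * rootsp z.
Proof. by rewrite /rootsp big_cat. Qed.

Lemma size_rootsp s : size (rootsp s) = (size s).+1.
Proof. exact: size_prod_XsubC. Qed.

Lemma lead_coef_rootsp s : lead_coef (rootsp s) = 1.
Proof. exact: lead_coef_prod_XsubC. Qed.

Lemma rootsp_neq0 s : rootsp s != 0.
Proof. by rewrite -size_poly_eq0 size_rootsp. Qed.

Lemma rootsp_perm s z : perm_eq s z -> rootsp s = rootsp z.
Proof. exact: perm_big. Qed.

Lemma rootsp_rem a s : a \in s -> rootsp s = ('X - a%:P) * rootsp (rem a s).
Proof. by move=> sa; rewrite (rootsp_perm (perm_to_rem sa)) rootsp_cons. Qed.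

Lemma horner_deriv_rootsp a s : a \in s -> (rootsp s)^`().[a] = (rootsp (rem a s)).[a].
Proof.
move=> sa; rewrite (rootsp_rem sa) derivM derivXsubC mul1r !hornerE.
by rewrite subrr mul0r addr0.
Qed.

(* For D a list of repeated roots of the duplicate-free z, the derivative of
   rootsp (D ++ z) keeps the factor rootsp D, times this cofactor. *)
Definition multi_cofactor D z : {poly R} :=
  \sum_(a <- D) rootsp (rem a z) + (rootsp z)^`().

Lemma deriv_rootsp_multi D z : {subset D <= z} ->
  (rootsp (D ++ z))^`() = rootsp D * multi_cofactor D z.
Proof.
rewrite /multi_cofactor rootsp_cat derivM mulrDr => sDz; congr (_ + _).
elim: D sDz => [|a D IH] sDz; first by rewrite /rootsp !big_nil derivC !mul0r mulr0.
have az : a \in z by apply: sDz; rewrite mem_head.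
rewrite rootsp_cons big_cons derivM derivXsubC mul1r mulrDl -mulrA.
rewrite IH => [|t tD]; last by apply: sDz; rewrite in_cons tD orbT.
by rewrite [in rootsp D * rootsp z](rootsp_rem az); ring.
Qed.

Lemma horner_multi_cofactor D z x : uniq z -> x \in z ->
  (multi_cofactor D z).[x] =
  (count_mem x D).+1%:R * (rootsp (rem x z)).[x].
Proof.
move=> uz xz; rewrite /multi_cofactor hornerD horner_deriv_rootsp // -addn1 natrD mulrDl mul1r.
congr (_ + _); elim: D => [|a D IH]; first by rewrite big_nil hornerE mul0r.
rewrite big_cons hornerD IH /=.
have [<-|xa] := eqVneq x a; first by rewrite add1n mulrS mulrDl mul1r.
suff -> : (rootsp (rem a z)).[x] = 0 by rewrite add0r.
by apply/rootP; rewrite root_prod_XsubC (mem_rem_uniq _ uz) inE xa.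
Qed.

End RootPoly.

Lemma rootsp_of_roots (F : fieldType) (p : {poly F}) (y : seq F) :
  size p = (size y).+1 -> uniq y -> all (root p) y -> p = lead_coef p *: rootsp y.
Proof.
move=> sp uy py; have uy' : poly.uniq_roots y by rewrite uniq_rootsE.
have [q pq] := uniq_roots_prod_XsubC py uy'; rewrite -/(rootsp y) in pq.
have q0 : q != 0 by apply/eqP => q0; move: sp; rewrite pq q0 mul0r size_poly0.
move: sp; rewrite pq size_mul ?rootsp_neq0 // size_rootsp addnS /=.
move=> /eqP; rewrite -(add1n (size y)) eqn_add2r => /eqP sq.
rewrite (size1_polyC (eq_leq sq)) lead_coefM lead_coefC lead_coef_rootsp.
by rewrite mulr1 mul_polyC.
Qed.

Section Sign.
Variable R : realDomainType.
Implicit Types (c a : R) (s : seq R).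

Lemma sign_rootsp c s : c \notin s -> 0 < (-1) ^+ nabove c s * (rootsp s).[c].
Proof.
elim: s => [|a s IH]; first by rewrite /rootsp big_nil hornerE -polyC1 hornerC ltr01.
rewrite in_cons negb_or => /andP[ca /IH{}IH].
rewrite rootsp_cons hornerM hornerXsubC nabove_cons.
have [lt_ca|lt_ac|eq_ca] := ltgtP c a; last by rewrite eq_ca eqxx in ca.
- have -> : (-1) ^+ (true + nabove c s) * ((c - a) * (rootsp s).[c]) =
            (a - c) * ((-1) ^+ nabove c s * (rootsp s).[c]) by rewrite exprS; ring.
  by rewrite mulr_gt0 // subr_gt0.
- have -> : (-1) ^+ (false + nabove c s) * ((c - a) * (rootsp s).[c]) =
            (c - a) * ((-1) ^+ nabove c s * (rootsp s).[c]) by ring.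
  by rewrite mulr_gt0 // subr_gt0.
Qed.

Lemma rootsp_above c s : all (fun l => l < c) s -> 0 < (rootsp s).[c].
Proof.
move=> sc; have := sign_rootsp (c := c) (s := s).
rewrite nabove_eq0 ?expr0 ?mul1r; last by apply/allP => l /(allP sc) /ltW.
by apply; apply/negP => /(allP sc); rewrite ltxx.
Qed.

Lemma rootsp_below c s : all (fun l => c < l) s ->
  0 < (-1) ^+ size s * (rootsp s).[c].
Proof.
move=> cs; rewrite -(nabove_size cs); apply: sign_rootsp.
by apply/negP => /(allP cs); rewrite ltxx.
Qed.

Lemma seq_bounded s : exists B, forall l, l \in s -> - B < l < B.
Proof.
exists (1 + \sum_(l <- s) `|l|) => l ls; rewrite -ltr_norml.
rewrite (big_rem _ ls) /= addrCA ltrDl (lt_le_trans ltr01) // lerDl.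
by rewrite sumr_ge0.
Qed.

End Sign.

Section RealRoots.
Variable R : rcfType.
Implicit Types (p : {poly R}) (c : R) (s u x y z w D : seq R).

Lemma ivt_interl p x : sorted >%R x -> (0 < size x)%N ->
  (forall j, (j < size x)%N -> 0 < (-1) ^+ j * p.[x`_j]) ->
  exists y, interl x y /\ all (root p) y.
Proof.
elim: x p => [|a [|a' x] IH] p // sx _ alt; first by exists [::].
have pa : 0 < p.[a] by have := alt 0%N isT; rewrite expr0 mul1r.
have pa' : p.[a'] < 0 by have := alt 1%N isT; rewrite expr1 mulN1r oppr_gt0.
have pa'a : p.[a'] * p.[a] < 0 by rewrite nmulr_rlt0.
have /andP[a'a _] := sx; have [b b_in pb] := poly_ivtoo (ltW a'a) pa'a.
have /andP[a'b ba] : (a' < b) && (b < a) by move: b_in; rewrite in_itv.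
have [|y [ixy py]] := IH (- p) (path_sorted sx) isT.
  by move=> j jx; have := alt j.+1 jx; rewrite hornerN mulrN exprS mulN1r mulNr.
exists (b :: y); rewrite interl_cons2 a'b ba ixy /= pb.
by rewrite -(eq_all (rootN p)).
Qed.


Lemma sorted_gt_uniq s : sorted >%R s -> uniq s.
Proof. by apply: sorted_uniq; [exact: gt_trans | exact: ltxx]. Qed.

Lemma alternating_interl p x : sorted >%R x -> (0 < size x)%N ->
  (size p <= size x)%N ->
  (forall j, (j < size x)%N -> 0 < (-1) ^+ j * p.[x`_j]) ->
  exists g y, [/\ 0 < g, interl x y & p = g *: rootsp y].
Proof.
move=> sx x0 sp alt; have [y [ixy py]] := ivt_interl sx x0 alt.
have uy := sorted_gt_uniq (interl_sorted ixy).2.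
have px0 : 0 < p.[x`_0] by have := alt 0%N x0; rewrite expr0 mul1r.
have p0 : p != 0 by apply: contraTneq px0 => ->; rewrite horner0 ltxx.
have size_p : size p = (size y).+1.
  by apply/eqP; rewrite eqn_leq max_poly_roots // andbT -(interl_size ixy).
have pE := rootsp_of_roots size_p uy py.
exists (lead_coef p), y; split => //.
case: x sx x0 sp alt ixy px0 => [|a x] // _ _ _ _ ixy px0; rewrite pE hornerZ in px0.
by rewrite -(pmulr_lgt0 _ (rootsp_above (interl_below_head ixy))).
Qed.

Lemma split_multiple_roots u : exists D z,
  [/\ perm_eq u (D ++ z), sorted >%R z & {subset D <= z}].
Proof.
suff [D [z [uDz uz sDz]]] : exists D z, [/\ perm_eq u (D ++ z), uniq z & {subset D <= z}].
  exists D, (rev (sort <=%R z)); split.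
  - by rewrite (perm_trans uDz) // perm_cat2l perm_sym perm_rev perm_sort.
  - by rewrite rev_sorted sort_lt_sorted.
  - by move=> t /sDz; rewrite mem_rev mem_sort.
elim: u => [|a u [D [z [uDz uz sDz]]]]; first by exists [::], [::].
have [az|az] := boolP (a \in z).
  exists (a :: D), z; split => //; first by rewrite /= perm_cons.
  by move=> t; rewrite in_cons => /orP[/eqP ->|/sDz].
exists D, (a :: z); split; [|by rewrite /= az uz|by move=> t /sDz; rewrite in_cons orbC => ->].
by rewrite perm_sym -cat1s perm_catCA /= perm_cons perm_sym.
Qed.

Lemma multi_cofactor_alternates D z : sorted >%R z ->
  forall j, (j < size z)%N -> 0 < (-1) ^+ j * (multi_cofactor D z).[z`_j].
Proof.
move=> sz j jz; have zj := mem_nth 0 jz; have uz := sorted_gt_uniq sz.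
have := sign_rootsp (negbT (mem_rem_uniqF (z`_j) uz)).
rewrite /nabove count_rem zj ltxx andbF subn0 -/(nabove _ _) nabove_nth // => sgn.
rewrite horner_multi_cofactor // mulrCA mulr_gt0 // ltr0Sn.
Qed.

Lemma deriv_interl u : (0 < size u)%N -> exists D z w g,
  [/\ perm_eq u (D ++ z), interl z w, 0 < g &
      (rootsp u)^`() = g *: rootsp (D ++ w)].
Proof.
move=> u0; have [D [z [uDz sz sDz]]] := split_multiple_roots u.
have uE := rootsp_perm uDz.
have z0 : (0 < size z)%N.
  case: z uDz sDz {sz uE} => // uDz sDz; case: D uDz sDz => [|a D] uDz sDz.
    by move: u0; rewrite (perm_size uDz).
  by have := sDz a (mem_head a D).
have dE := deriv_rootsp_multi sDz; set G := multi_cofactor D z in dE.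
have size_G : (size G <= size z)%N.
  have [->|G0] := eqVneq G 0; first by rewrite size_poly0.
  have := lt_size_deriv (rootsp_neq0 (D ++ z)).
  rewrite dE size_mul ?rootsp_neq0 // !size_rootsp size_cat addSn /=.
  by rewrite -[(size D + size z).+1]addnS ltn_add2l.
have [g [w [g0 izw GE]]] := alternating_interl sz z0 size_G (multi_cofactor_alternates D sz).
by exists D, z, w, g; rewrite uE dE GE rootsp_cat scalerAr.
Qed.

Lemma sorted_gt_between lo hi s : sorted >%R s -> all (fun l => lo < l < hi) s ->
  lo < hi -> sorted >%R (hi :: s ++ [:: lo]).
Proof.
elim: s hi => [|b s IH] hi /=; first by rewrite andbT.
move=> sbs /andP[/andP[lob bhi] lhs] _; rewrite bhi /=.
apply: IH => //; first exact: path_sorted sbs.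
apply/allP => l ls; have /andP[-> _] := allP lhs l ls.
exact: (allP (sorted_gt_head sbs)).
Qed.

Lemma shift_alternates z w c a B : interl z w -> 0 < c ->
  {in a :: z ++ w, forall l, - B < l < B} ->
  let xs := B :: w ++ [:: - B] in
  forall j, (j < size xs)%N ->
  0 < (-1) ^+ j * (rootsp z + c *: (('X - a%:P) * rootsp w)).[xs`_j].
Proof.
move=> izw c0 Bs xs j; have size_z := interl_size izw.
have Bin s : {subset s <= a :: z ++ w} -> all (fun l => l < B) s /\ all (fun l => - B < l) s.
  by move=> sub; split; apply/allP => l /sub /Bs /andP[].
have [zB Bz] : all (fun l => l < B) z /\ all (fun l => - B < l) z.
  by apply: Bin => l lz; rewrite in_cons mem_cat lz orbT.
have [wB Bw] : all (fun l => l < B) w /\ all (fun l => - B < l) w.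
  by apply: Bin => l lw; rewrite in_cons mem_cat lw !orbT.
have /andP[lt_Ba lt_aB] : - B < a < B by apply: Bs; rewrite mem_head.
rewrite hornerD hornerZ hornerM hornerXsubC.
case: j => [_|j]; rewrite /xs /=.
  by rewrite expr0 mul1r addr_gt0 ?rootsp_above // !mulr_gt0 ?subr_gt0 ?rootsp_above.
rewrite size_cat /= addn1 !ltnS nth_cat leq_eqVlt => /orP[/eqP jw|jw]; last first.
  have wj : w`_j \in w := mem_nth 0 jw.
  rewrite jw; have -> : (rootsp w).[w`_j] = 0 by apply/rootP; rewrite root_prod_XsubC.
  rewrite !mulr0 addr0 -(interl_nabove_nth izw jw).
  exact/sign_rootsp/(interl_notin izw).
rewrite jw ltnn subnn /= mulrDr.
have -> : (-1) ^+ (size w).+1 * (c * ((- B - a) * (rootsp w).[- B])) =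
          c * (B + a) * ((-1) ^+ size w * (rootsp w).[- B]) by rewrite exprS; ring.
have aB : 0 < B + a by lra.
apply: addr_gt0; first by rewrite -size_z; apply: rootsp_below.
by apply: mulr_gt0; [exact: mulr_gt0 | exact: rootsp_below].
Qed.

Lemma shift_interl z w c a : interl z w -> 0 < c -> exists d y,
  [/\ 0 < d, interl y w &
      rootsp z + c *: (('X - a%:P) * rootsp w) = d *: rootsp y].
Proof.
move=> izw c0; have [B Bs] := seq_bounded (a :: z ++ w).
have /andP[lt_Ba lt_aB] : - B < a < B by apply: Bs; rewrite mem_head.
pose xs := B :: w ++ [:: - B].
have sxs : sorted >%R xs.
  rewrite sorted_gt_between ?(lt_trans lt_Ba lt_aB) ?(interl_sorted izw).2 //.
  by apply/allP => l lw; apply: Bs; rewrite in_cons mem_cat lw !orbT.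
have size_F : (size (rootsp z + c *: (('X - a%:P) * rootsp w))%R <= size xs)%N.
  rewrite (leq_trans (size_polyD _ _)) // geq_max size_rootsp (interl_size izw).
  rewrite /xs /= size_cat /= addn1 leqnn /= (leq_trans (size_scale_leq _ _)) //.
  by rewrite size_mul ?polyXsubC_eq0 ?rootsp_neq0 // size_XsubC size_rootsp.
have [d [y [d0 ixy FE]]] := alternating_interl sxs isT size_F (shift_alternates izw c0 Bs).
by exists d, y; split => //; exact: interl_strip ixy.
Qed.

Lemma deriv_real_rooted u : (0 < size u)%N -> exists g v,
  [/\ 0 < g, size v = (size u).-1 & (rootsp u)^`() = g *: rootsp v].
Proof.
move=> u0; have [D [z [w [g [uDz izw g0 dE]]]]] := deriv_interl u0.
exists g, (D ++ w); split => //.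
by rewrite (perm_size uDz) !size_cat (interl_size izw) addnS.
Qed.

Lemma deriv_shift_interl u c a : (0 < size u)%N -> 0 < c ->
  exists U V (g d : R),
  [/\ 0 < g, 0 < d, rootsp u + c *: (('X - a%:P) * (rootsp u)^`()) = d *: rootsp U
    & (rootsp u)^`() = g *: rootsp V] /\
  [/\ size U = size u, size V = (size u).-1 & count_interlacing U V].
Proof.
move=> u0 c0; have [D [z [w [g [uDz izw g0 dE]]]]] := deriv_interl u0.
have [d [y [d0 iyw FE]]] := shift_interl a izw (mulr_gt0 c0 g0).
have size_u : size u = (size D + (size w).+1)%N.
  by rewrite (perm_size uDz) size_cat (interl_size izw).
exists (D ++ y), (D ++ w), g, d; split; split => //.
- rewrite dE (rootsp_perm uDz) !rootsp_cat [d *: _]scalerAr -FE.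
  by rewrite -!mul_polyC polyCM; ring.
- by rewrite size_u size_cat (interl_size iyw).
- by rewrite size_u size_cat addnS.
- exact/count_interlacing_catl/interl_count_interlacing.
Qed.

End RealRoots.

Section ElementarySymmetric.
Variables (R : comNzRingType) (n : nat) (r : 'I_n -> R).
Implicit Types (A : {set 'I_n}) (m : nat).

Definition sigma_on A m : {poly R} :=
  \sum_(S : {set 'I_n} | (S \subset A) && (#|S| == m)) \prod_(j in S) ('X + (r j)%:P).

Lemma sigma_poly_on m : sigma_poly r m = sigma_on setT m.
Proof. by apply: eq_bigl => S; rewrite subsetT. Qed.

Lemma sigma_on0 A : sigma_on A 0 = 1.
Proof.
rewrite /sigma_on (big_pred1 set0) ?big_set0 // => S /=.
by rewrite cards_eq0; case: eqP => [->|_]; rewrite ?sub0set ?andbF.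
Qed.

Lemma sigma_on_gt A m : (#|A| < m)%N -> sigma_on A m = 0.
Proof.
move=> Am; rewrite /sigma_on big_pred0 // => S /=.
apply/negP => /andP[SA /eqP Sm].
by have := subset_leq_card SA; rewrite Sm leqNgt Am.
Qed.

Lemma sigma_on_card A : sigma_on A #|A| = rootsp [seq - r j | j <- enum A].
Proof.
rewrite /sigma_on (big_pred1 A) => [|S /=].
  by rewrite /rootsp big_map big_enum; apply: eq_bigr => j _; rewrite polyCN opprK.
rewrite eqEcard; case: (boolP (S \subset A)) => //= SA.
by rewrite eqn_leq subset_leq_card.
Qed.

(* Pascal-type recurrence: split the subsets according to whether they contain i. *)
Lemma sigma_on_rec A i m : i \in A ->
  sigma_on A m.+1 = sigma_on (A :\ i) m.+1 + ('X + (r i)%:P) * sigma_on (A :\ i) m.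
Proof.
move=> iA; rewrite /sigma_on [LHS](bigID (fun S : {set 'I_n} => i \in S)) [LHS]addrC /=.
congr (_ + _); first by apply: eq_bigl => S; rewrite subsetD1 andbAC.
rewrite mulr_sumr (reindex_onto (fun T => i |: T) (fun S => S :\ i)) /=; last first.
  by move=> S /andP[_ iS]; rewrite setD1K.
apply: eq_big => [T|T /andP[_ /eqP eT]]; last by rewrite big_setU1 // -eT setD11.
have [iT|iT] := boolP (i \in T).
  have TiT : (T :\ i == T) = false.
    by apply/negbTE/eqP => eT; move: iT; rewrite -eT setD11.
  by rewrite (setUidPr _) ?sub1set // subsetD1 iT TiT !andbF.
rewrite setU1K // eqxx setU11 !andbT cardsU1 iT add1n eqSS.
by rewrite subUset sub1set iA subsetD1 iT andbT.
Qed.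

(* Derivative in t: each subset of size m lies in #|A| - m subsets of size
   m+1; proved by induction on #|A| through the recurrence above. *)
Lemma sigma_on_deriv A m : (sigma_on A m.+1)^`() = (#|A| - m)%:R *: sigma_on A m.
Proof.
move: {2}#|A| (erefl #|A|) => N; elim: N A m => [|N IH] A m hA.
  by rewrite sigma_on_gt ?hA // deriv0 sub0n scale0r.
have [i iA] : exists i, i \in A by apply/set0Pn; rewrite -cards_eq0 hA.
have hA' : #|A :\ i| = N by move: hA; rewrite (cardsD1 i A) iA add1n => -[].
have dX : ('X + (r i)%:P)^`() = 1 by rewrite derivD derivX derivC addr0.
rewrite (sigma_on_rec m iA) derivD derivM dX IH // mul1r hA.
case: m => [|m].
  rewrite !sigma_on0 hA' !subn0 derivC mulr0 addr0.
  by rewrite -!mul_polyC !mulr1 -natr1 rmorphD rmorph1.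
rewrite IH // hA' subSS (sigma_on_rec m iA).
have [hm|hm] := leqP m.+1 N.
  have e : (N - m.+1)%:R + 1 = (N - m)%:R :> R by rewrite natr1 subnSK.
  by rewrite -!mul_polyC -e rmorphD rmorph1; ring.
by rewrite (@sigma_on_gt (A :\ i) m.+1) ?hA' // -!mul_polyC; ring.
Qed.

Lemma q_poly_sigma_on i k : q_poly r i k.+1 = sigma_on (setT :\ i) k.
Proof.
elim: k => [|k IH].
  by rewrite /q_poly big_ord1 /= expr0 scale1r mulr1 sigma_poly_on !sigma_on0.
rewrite /q_poly big_ord_recl /= subn0 expr0 scale1r mulr1.
set x := 'X + (r i)%:P.
have -> : \sum_(j < k.+1) ((-1) ^+ (lift ord0 j) *: sigma_poly r (k.+1 - lift ord0 j)
     * x ^+ lift ord0 j) = - (x * q_poly r i k.+1).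
  rewrite /q_poly mulr_sumr -sumrN; apply: eq_bigr => j _.
  rewrite lift0 subSS /= !exprS mulN1r scaleNr -!mul_polyC; ring.
by rewrite IH sigma_poly_on (sigma_on_rec k (in_setT i)) /x; ring.
Qed.

End ElementarySymmetric.

(* Every sigma_m over a set of real shifts is real-rooted: descend from the
   top degree, where it is a product of linear factors, using the derivative
   formula and real-rootedness of derivatives. *)
Lemma sigma_on_real_rooted (R : rcfType) (n : nat) (r : 'I_n -> R)
    (A : {set 'I_n}) (m : nat) : (m <= #|A|)%N ->
  exists (c : R) s, [/\ 0 < c, size s = m & sigma_on r A m = c *: rootsp s].
Proof.
move=> mA; have [d hd] : exists d, (m + d)%N = #|A| by exists (#|A| - m)%N; rewrite subnKC.
elim: d m hd {mA} => [|d IH] m hd.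
  rewrite addn0 in hd; rewrite hd; exists 1, [seq - r j | j <- enum A].
  by rewrite scale1r size_map -cardE sigma_on_card ltr01.
have [c [s [c0 size_s sE]]] := IH m.+1 (etrans (addSnnS m d) hd).
have [|g [t [g0 size_t tE]]] := deriv_real_rooted (u := s); first by rewrite size_s.
have dE := sigma_on_deriv r A m; rewrite sE derivZ tE -hd addKn in dE.
have d0 : (d.+1%:R : R) != 0 by rewrite pnatr_eq0.
exists ((d.+1%:R)^-1 * (c * g)), t; split.
- by rewrite mulr_gt0 ?invr_gt0 ?ltr0n // mulr_gt0.
- by rewrite size_t size_s.
- by apply: (scalerI d0); rewrite -dE !scalerA mulrA divff // mul1r.
Qed.

Section Interlacing.
Variable R : rcfType.
Implicit Types (f g : {poly R}) (k : nat).

Definition interlacing_factorization f g k : Prop :=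
  exists U V (cf cg : R),
  [/\ cf != 0, cg != 0, f = cf *: rootsp U & g = cg *: rootsp V] /\
  [/\ size U = k.+1, size V = k & count_interlacing U V].

(* Any root lists of such f and g are permutations of U and V, so once sorted
   they interlace entrywise. *)
Lemma interlacing_factorization_roots f g k :
  interlacing_factorization f g k ->
  (exists (u v : seq R),
      [/\ size u = k.+1, size v = k.+1.-1, is_root_list f u & is_root_list g v]) /\
  (forall (u v : seq R),
      size u = k.+1 -> size v = k.+1.-1 -> nonincr u -> nonincr v ->
      is_root_list f u -> is_root_list g v ->
      forall j : nat, (j < k.+1.-1)%N -> u`_j.+1 <= v`_j /\ v`_j <= u`_j).
Proof.
move=> [U [V [cf [cg [[cf0 cg0 fE gE] [size_U size_V UV]]]]]].
have lf : lead_coef f = cf by rewrite fE lead_coefZ lead_coef_rootsp mulr1.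
have lg : lead_coef g = cg by rewrite gE lead_coefZ lead_coef_rootsp mulr1.
split; first by exists U, V; rewrite /is_root_list lf lg.
move=> u v size_u size_v su sv; rewrite /is_root_list lf lg => fu gv.
have Uu : perm_eq U u by apply/prod_XsubC_eq/(scalerI cf0); rewrite -fE -fu.
have Vv : perm_eq V v by apply/prod_XsubC_eq/(scalerI cg0); rewrite -gE -gv.
apply: (count_interlacing_nth size_u size_v su sv) => c.
by rewrite /nabove -(permP Uu) -(permP Vv); exact: UV.
Qed.

Variables (n : nat) (r : 'I_n -> R) (i : 'I_n).
Local Notation Ai := ([set: 'I_n] :\ i).

Lemma card_Ai : #|Ai| = n.-1.
Proof.
have := cardsD1 i [set: 'I_n]; rewrite in_setT cardsT card_ord add1n => n_eq.
by rewrite [in RHS]n_eq.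
Qed.

Lemma sigma_poly_split k :
  sigma_poly r k.+1 = sigma_on r Ai k.+1 + ('X + (r i)%:P) * q_poly r i k.+1.
Proof. by rewrite q_poly_sigma_on sigma_poly_on (sigma_on_rec _ k (in_setT i)). Qed.

(* Top degree k + 1 = n: s_{k+1} vanishes and sigma_n = (t + r_i) q_{i,n}. *)
Lemma interlacing_top k : k.+1 = n ->
  interlacing_factorization (sigma_poly r k.+1) (q_poly r i k.+1) k.
Proof.
move=> kn; have kA : (k <= #|Ai|)%N by rewrite card_Ai -kn.
have [c [s [c0 size_s sE]]] := sigma_on_real_rooted r kA.
exists (- r i :: s), s, c, c; split; split => //; rewrite ?gt_eqF //=.
- rewrite sigma_poly_split sigma_on_gt ?card_Ai -?kn // add0r q_poly_sigma_on sE.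
  by rewrite rootsp_cons polyCN opprK scalerAr.
- by rewrite q_poly_sigma_on.
- by rewrite size_s.
- exact: count_interlacing_cons.
Qed.

(* Lower degrees: s_k = s_{k+1}' / (n - 1 - k), so sigma_{k+1} is
   s_{k+1} + c (t + r_i) s_{k+1}' with c > 0 and the key step applies. *)
Lemma interlacing_generic k : (k.+1 < n)%N ->
  interlacing_factorization (sigma_poly r k.+1) (q_poly r i k.+1) k.
Proof.
move=> kn; have kA : (k.+1 <= #|Ai|)%N by rewrite card_Ai -ltnS prednK // (leq_ltn_trans _ kn).
have [c [s [c0 size_s sE]]] := sigma_on_real_rooted r kA.
pose N := (n - k.+1)%N; have N0 : (0 < N)%N by rewrite subn_gt0.
have s0 : (0 < size s)%N by rewrite size_s.
have N'0 : 0 < N%:R^-1 :> R by rewrite invr_gt0 ltr0n.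
have [U [V [g [d [[g0 d0 UE VE] [size_U size_V UV]]]]]] := deriv_shift_interl (- r i) s0 N'0.
have qE : q_poly r i k.+1 = (N%:R^-1 * (c * g)) *: rootsp V.
  have := sigma_on_deriv r Ai k; rewrite sE derivZ VE card_Ai -subn1 -subnDA add1n.
  rewrite -/N => dE; rewrite q_poly_sigma_on -!scalerA dE scalerA mulVf ?scale1r //.
  by rewrite pnatr_eq0 -lt0n.
exists U, V, (c * d), (N%:R^-1 * (c * g)); split; split; rewrite ?size_U ?size_V ?size_s //.
- by rewrite mulf_neq0 ?gt_eqF.
- by rewrite !mulf_neq0 ?invr_eq0 ?pnatr_eq0 -?lt0n ?gt_eqF.
- rewrite sigma_poly_split qE sE -[(c * d) *: _]scalerA -UE VE polyCN opprK.
  by rewrite -!mul_polyC !polyCM; ring.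
Qed.

End Interlacing.

Theorem lemma2p8 (R : rcfType) (n : nat) (r : 'I_n -> R) (i : 'I_n) (k : nat)
    (hk1 : (1 <= k)%N) (hkn : (k <= n)%N) :
  (exists (u v : seq R),
      [/\ size u = k, size v = k.-1,
          is_root_list (sigma_poly r k) u & is_root_list (q_poly r i k) v]) /\
  (forall (u v : seq R),
      size u = k -> size v = k.-1 -> nonincr u -> nonincr v ->
      is_root_list (sigma_poly r k) u -> is_root_list (q_poly r i k) v ->
      forall j : nat, (j < k.-1)%N ->
        u`_j.+1 <= v`_j /\ v`_j <= u`_j).
Proof.
case: k hk1 hkn => // k _ hkn; apply: interlacing_factorization_roots.
have [kn|nk] := ltnP k.+1 n; first exact: interlacing_generic.
by apply: interlacing_top; apply/eqP; rewrite eqn_leq hkn nk.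
Qed.
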